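(* Let $G$ be a modular noetherian right $\ell$-group with strong order unit $s$ and degree homomorphism $\deg$. Let $d \geq 1$, and let $g \in G^-$ be $d$-homogeneous with right-normal factorization $g = g_k g_{k-1}\cdots g_1$. Then this factorization is also left-normal. That is, the sequence $h_i := g_{k+1-i}$ ($1 \leq i \leq k$) is the left-normal factorization $g = h_1 h_2 \cdots h_k$.
   Context: A right $\ell$-group is a group $G$ (identity $e$) with a right-invariant partial order making $G$ a lattice. It is modular if the lattice is modular. It is noetherian if for each $g$ the set $\{h \geq g\}$ satisfies the descending chain condition and the set $\{h \leq g\}$ satisfies the ascending chain condition. $G^- = \{g \leq e\}$ and $[a,b] = \{x : a\leq x\leq b\}$. A strong order unit is an element $s > e$ such that $x \mapsto sx$ is a lattice automorphism and every $g$ satisfies $g \leq s^k$ for some $k \in \mathbb{Z}$. $\deg : G \to \mathbb{Z}$ is the unique group homomorphism sending $g \in G^-$ to the common length of its factorizations into elements covered by $e$. A right-normal factorization of $g \in G^-$ is a sequence $g_1,\dots,g_k \in [s^{-1},e] \setminus \{e\}$ with $g = g_k\cdots g_1$ such that, for $1 \leq i < k$, there are no $h,h' \in G^-$ with $h\neq e$, $h'h = g_{i+1}$, $hg_i \in [s^{-1},e]$. It exists and is unique. A left-normal factorization of $g$ is a sequence $h_1,\dots,h_k \in [s^{-1},e]\setminus\{e\}$ with $g = h_1\cdots h_k$ such that, for $1 \leq i<k$, there are no $h,h' \in G^-$ with $h \neq e$, $hh' = h_{i+1}$, $h_ih \in [s^{-1},e]$. The element $g$ is $d$-homogeneous if every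 factor $g_i$ of its right-normal factorization satisfies $\deg(g_i) = d$. *)

From HB Require Import structures.
From mathcomp Require Import all_boot all_order ssralg ssrint.
Set Implicit Arguments. Unset Strict Implicit. Unset Printing Implicit Defensive.
Import Order.TTheory.
Local Open Scope order_scope.

Section RLGroup.
Context {disp : Order.disp_t} {T : latticeType disp}.
Variables (mul : T -> T -> T) (inv : T -> T) (e : T).

Definition is_right_lgroup : Prop :=
  (forall x y z, mul x (mul y z) = mul (mul x y) z) /\
  (forall x, mul e x = x) /\ (forall x, mul x e = x) /\
  (forall x, mul (inv x) x = e) /\ (forall x, mul x (inv x) = e) /\
  (forall x y z, x <= y -> mul x z <= mul y z).

Definition modular_lattice : Prop :=
  forall x y z : T, x <= z -> x `|` (y `&` z) = (x `|` y) `&` z.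

Definition noetherian : Prop :=
  forall g : T,
    (~ exists f : nat -> T, forall n, g <= f n /\ f n.+1 < f n) /\
    (~ exists f : nat -> T, forall n, f n <= g /\ f n < f n.+1).

Definition zpow (x : T) (k : int) : T :=
  match k with
  | Posz n => iter n (mul x) e
  | Negz n => iter n.+1 (mul (inv x)) e
  end.

Definition strong_order_unit (s : T) : Prop :=
  [/\ e < s,
      bijective (mul s),
      {morph (mul s) : x y / x `&` y},
      {morph (mul s) : x y / x `|` y}
    & forall g, exists k : int, g <= zpow s k].

Definition covered_by_e (a : T) : Prop :=
  a < e /\ ~ exists c, a < c /\ c < e.

Definition prodl (xs : seq T) : T := foldr mul e xs.

Definition is_degree (deg : T -> int) : Prop :=
  (forall x y, deg (mul x y) = (deg x + deg y)%R) /\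
  (forall (g : T) (xs : seq T), g <= e -> (forall a, a \in xs -> covered_by_e a) ->
     g = prodl xs -> deg g = Posz (size xs)).

Definition in_box (s x : T) : Prop := inv s <= x /\ x <= e.

(* right-normal factorization: gs = [:: g_1; ...; g_k] with g = g_k ... g_1 *)
Definition right_normal (s g : T) (gs : seq T) : Prop :=
  [/\ (forall x, x \in gs -> in_box s x /\ x != e),
      g = prodl (rev gs)
    & forall i, i.+1 < size gs ->
        ~ exists h h', [/\ h <= e, h' <= e, h != e,
                          mul h' h = nth e gs i.+1 & in_box s (mul h (nth e gs i))]].

(* left-normal factorization: hs = [:: h_1; ...; h_k] with g = h_1 ... h_k *)
Definition left_normal (s g : T) (hs : seq T) : Prop :=
  [/\ (forall x, x \in hs -> in_box s x /\ x != e),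
      g = prodl hs
    & forall i, i.+1 < size hs ->
        ~ exists h h', [/\ h <= e, h' <= e, h != e,
                          mul h h' = nth e hs i.+1 & in_box s (mul (nth e hs i) h)]].

End RLGroup.

From mathcomp Require Import all_boot all_order ssralg ssrint.
From mathcomp Require Import zify.
From Stdlib Require Import Classical ClassicalEpsilon.
Set Implicit Arguments. Unset Strict Implicit. Unset Printing Implicit Defensive.
Import Order.TTheory.
Local Open Scope order_scope.

(* Let a = g_i and b = g_(i+1) be consecutive factors and a' = s^-1 a^-1, so
   that a' a = s^-1. Right normality of (a, b) forces b `|` a' = e, since
   otherwise z = b `|` a' < e could be moved from b to a. A witness h against
   left normality of (b, a) gives s^-1 < s^-1 h^-1 <= b `&` a', hence
   deg (b `&` a') < deg s^-1. But deg counts the length of maximal chains, and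
   in a modular noetherian lattice the intervals [b `&` a', a'] and
   [b, b `|` a'] = [b, e] have maximal chains of the same length, so
   deg (b `&` a') = deg b + deg a' = deg s^-1 because deg a = deg b. *)

Lemma wf_no_descending_chain (A : Type) (R : A -> A -> Prop) :
  ~ (exists f : nat -> A, forall n, R (f n.+1) (f n)) -> well_founded R.
Proof.
move=> no_desc x; apply: NNPP => x_nacc; apply: no_desc.
pose step y := epsilon (inhabits x) (fun z => R z y /\ ~ Acc R z).
have stepP y : ~ Acc R y -> R (step y) y /\ ~ Acc R (step y).
  move=> y_nacc; apply: (epsilon_spec (inhabits x) (fun z => R z y /\ ~ Acc R z)).
  apply: NNPP => none.
  apply: y_nacc; constructor => z Rzy; apply: NNPP => z_nacc.
  by apply: none; exists z.
have nacc n : ~ Acc R (iter n step x) by elim: n => //= n /stepP [].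
by exists (fun n => iter n step x) => n; exact: (stepP _ (nacc n)).1.
Qed.

Section CoveringChains.
Context {disp : Order.disp_t} {T : latticeType disp}.

Definition covby (x y : T) : Prop := x < y /\ ~ exists z, x < z /\ z < y.

Inductive covchain : T -> T -> nat -> Prop :=
| covchain0 x : covchain x x 0
| covchainS x y z n : covby x y -> covchain y z n -> covchain x z n.+1.

Lemma covchain_le x y n : covchain x y n -> x <= y.
Proof. by elim=> // x' y' z' n' [/ltW xy _] _ /(le_trans xy). Qed.

Section Noetherian.
Hypothesis Hnoeth : @noetherian disp T.

Lemma exists_covby x y : x < y -> exists2 c, covby x c & c <= y.
Proof.
have wf : well_founded (fun u v => x <= u /\ u < v).
  apply: wf_no_descending_chain => -[f desc]; apply: (Hnoeth x).1.
  by exists (fun n => f n.+1) => n; split; [exact: (desc n).1 | exact: (desc n.+1).2].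
elim/(well_founded_ind wf): y => y IH xy.
case: (classic (exists t, x < t /\ t < y)) => [[t [xt ty]] | no_mid].
  by have [c xc /le_trans ct] := IH t (conj (ltW xt) ty) xt; exists c; last exact/ct/ltW.
by exists y.
Qed.

Lemma exists_covchain x y : x <= y -> exists n, covchain x y n.
Proof.
have wf : well_founded (fun u v => u <= y /\ v < u).
  apply: wf_no_descending_chain => -[f asc]; apply: (Hnoeth y).2.
  by exists (fun n => f n.+1) => n; split; [exact: (asc n).1 | exact: (asc n.+1).2].
elim/(well_founded_ind wf): x => x IH xy.
have [->|x_neq_y] := eqVneq x y; first by exists 0; constructor.
have [c xc cy] : exists2 c, covby x c & c <= y.
  by apply: exists_covby; rewrite lt_neqAle x_neq_y.
have [n cy_chain] := IH c (conj cy xc.1) cy.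
by exists n.+1; exact: covchainS xc cy_chain.
Qed.

End Noetherian.

Section Modular.
Hypothesis Hmod : @modular_lattice disp T.

Lemma join_meet_modK (a b u : T) : b `&` a <= u -> u <= a -> (u `|` b) `&` a = u.
Proof. by move=> bau ua; rewrite -Hmod // (join_idPl bau). Qed.

Lemma meet_join_modK (a b t : T) : b <= t -> t <= a `|` b -> (t `&` a) `|` b = t.
Proof. by move=> bt tab; rewrite joinC meetC Hmod // joinC (meet_idPr tab). Qed.

(* Modularity makes u |-> u `|` b an order isomorphism from [b `&` a, a] onto
   [b, a `|` b], with inverse t |-> t `&` a. *)
Lemma covby_join (a b u v : T) : b `&` a <= u -> v <= a -> covby u v ->
  covby (u `|` b) (v `|` b).
Proof.
move=> bau va [uv no_mid].
have ua : u <= a := le_trans (ltW uv) va.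
have bav : b `&` a <= v := le_trans bau (ltW uv).
split.
  rewrite lt_neqAle leU2 ?(ltW uv) // andbT; apply: contraTneq uv => eq_ub.
  have := congr1 (Order.meet^~ a) eq_ub.
  by rewrite /= (join_meet_modK bau ua) (join_meet_modK bav va) => ->; rewrite ltxx.
move=> [t [ut tv]]; apply: no_mid; exists (t `&` a).
have bt : b <= t := le_trans (leUr b u) (ltW ut).
have tab : t <= a `|` b := le_trans (ltW tv) (leU2 va (lexx b)).
have tK := meet_join_modK bt tab.
have u_le : u <= t `&` a by rewrite -(join_meet_modK bau ua) leI2 // ltW.
have le_v : t `&` a <= v by rewrite -(join_meet_modK bav va) leI2 // ltW.
split.
  by rewrite lt_neqAle u_le andbT; apply: contraTneq ut => ->; rewrite tK ltxx.
by rewrite lt_neqAle le_v andbT; apply: contraTneq tv => <-; rewrite tK ltxx.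
Qed.

Lemma covchain_join (a b u v : T) n : b `&` a <= u -> v <= a -> covchain u v n ->
  covchain (u `|` b) (v `|` b) n.
Proof.
move=> bau va uv; elim: uv bau va => [x|x y z m xy yz IH] bax za; first exact: covchain0.
apply: covchainS (covby_join bax (le_trans (covchain_le yz) za) xy) (IH _ za).
exact: le_trans bax (ltW xy.1).
Qed.

End Modular.
End CoveringChains.

Section RightLGroup.
Context {disp : Order.disp_t} {T : latticeType disp}.
Variables (mul : T -> T -> T) (inv : T -> T) (e : T).
Hypothesis mulA : forall x y z, mul x (mul y z) = mul (mul x y) z.
Hypothesis mul1g : forall x, mul e x = x.
Hypothesis mulg1 : forall x, mul x e = x.
Hypothesis mulVg : forall x, mul (inv x) x = e.
Hypothesis mulgV : forall x, mul x (inv x) = e.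
Hypothesis leM2r : forall x y z, x <= y -> mul x z <= mul y z.

Lemma mulKg x y : mul (inv x) (mul x y) = y.
Proof. by rewrite mulA mulVg mul1g. Qed.

Lemma mulgK x y : mul (mul y x) (inv x) = y.
Proof. by rewrite -mulA mulgV mulg1. Qed.

Lemma mulgKV x y : mul (mul y (inv x)) x = y.
Proof. by rewrite -mulA mulVg mulg1. Qed.

Lemma mulgI x : injective (mul x).
Proof. exact: (can_inj (g := mul (inv x)) (mulKg x)). Qed.

Lemma mulIg x : injective (mul^~ x).
Proof. exact: (can_inj (g := mul^~ (inv x)) (mulgK x)). Qed.

Lemma lerM2r z x y : (mul x z <= mul y z) = (x <= y).
Proof.
apply/idP/idP => [xy|]; last exact: leM2r.
by have := leM2r (inv z) xy; rewrite !mulgK.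
Qed.

Lemma ltrM2r z x y : (mul x z < mul y z) = (x < y).
Proof. by rewrite !lt_neqAle lerM2r (inj_eq (@mulIg z)). Qed.

Lemma covby_mulr z x y : covby x y -> covby (mul x z) (mul y z).
Proof.
move=> [xy no_mid]; split; first by rewrite ltrM2r.
move=> [t [xt ty]]; apply: no_mid; exists (mul t (inv z)).
by split; rewrite -(ltrM2r z) mulgKV.
Qed.

Variable deg : T -> int.
Hypothesis degM : forall x y, deg (mul x y) = (deg x + deg y)%R.
Hypothesis deg_atom : forall a, covby a e -> deg a = 1%R.

Lemma deg1 : deg e = 0%R.
Proof. by have := degM e e; rewrite mul1g; lia. Qed.

Lemma degV x : deg (inv x) = (- deg x)%R.
Proof. by have := degM x (inv x); rewrite mulgV deg1; lia. Qed.

Lemma deg_covby x y : covby x y -> deg x = (deg y + 1)%R.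
Proof. by move/(covby_mulr (inv y)); rewrite mulgV => /deg_atom; rewrite degM degV; lia. Qed.

Lemma deg_covchain x y n : covchain x y n -> deg x = (deg y + n%:Z)%R.
Proof. by elim=> [x'|x' y' z' n' /deg_covby -> _ ->]; lia. Qed.

Hypothesis Hnoeth : @noetherian disp T.
Hypothesis Hmod : @modular_lattice disp T.

Lemma deg_lt x y : x < y -> (deg y < deg x)%R.
Proof.
move=> /(exists_covby Hnoeth) [c /deg_covby -> /(exists_covchain Hnoeth) [n]].
by move/deg_covchain ->; lia.
Qed.

Lemma deg_meet_join a b : (deg (b `&` a) - deg a = deg b - deg (b `|` a))%R.
Proof.
have [n chain] := exists_covchain Hnoeth (leIr a b).
have := covchain_join Hmod (lexx _) (lexx _) chain.
rewrite meetUKC joinC => /deg_covchain; have := deg_covchain chain; lia.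
Qed.

Variable s : T.
Hypothesis s_meet : {morph mul s : x y / x `&` y}.

Lemma lerM2s x y : (mul s x <= mul s y) = (x <= y).
Proof.
apply/idP/idP => [sxy|xy]; last by rewrite -(meet_idPl xy) s_meet leIr.
have : mul s (x `&` y) = mul s x by rewrite s_meet; exact/meet_idPl.
by move/mulgI <-; exact: leIr.
Qed.

Lemma lerM2Vs x y : (mul (inv s) x <= mul (inv s) y) = (x <= y).
Proof. by rewrite -lerM2s !mulA !mulgV !mul1g. Qed.

Lemma ltrM2Vs x y : (mul (inv s) x < mul (inv s) y) = (x < y).
Proof. by rewrite !lt_neqAle lerM2Vs (inj_eq (@mulgI _)). Qed.

Definition right_normal_pair a b : Prop :=
  ~ exists h h', [/\ h <= e, h' <= e, h != e, mul h' h = b & in_box inv e s (mul h a)].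

Definition left_normal_pair a b : Prop :=
  ~ exists h h', [/\ h <= e, h' <= e, h != e, mul h h' = b & in_box inv e s (mul a h)].

Lemma right_normal_pair_join a b : in_box inv e s a -> in_box inv e s b ->
  right_normal_pair a b -> b `|` mul (inv s) (inv a) = e.
Proof.
move=> [sa ae] [_ be] rn; set a' := mul (inv s) (inv a).
have a'a : mul a' a = inv s by rewrite mulgKV.
have a'e : a' <= e by rewrite -(lerM2r a) a'a mul1g.
have ze : b `|` a' <= e by rewrite leUx be a'e.
have [//|z_neq_e] := eqVneq (b `|` a') e; exfalso; apply: rn.
exists (b `|` a'), (mul b (inv (b `|` a'))); split=> //.
- by rewrite -(lerM2r (b `|` a')) mulgKV mul1g leUl.
- by rewrite mulgKV.
split; first by rewrite -a'a leM2r ?leUr.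
by apply: le_trans ae; rewrite -[X in _ <= X]mul1g leM2r.
Qed.

Lemma lt_meet_of_left_witness a b h h' : h <= e -> h' <= e -> h != e ->
  mul h h' = a -> inv s <= mul b h -> inv s < b `&` mul (inv s) (inv a).
Proof.
move=> he h'e h_neq_e hh' sbh.
have e_lt_ih : e < inv h by rewrite -(ltrM2r h) mulVg mul1g lt_neqAle h_neq_e he.
have ih_le_ia : inv h <= inv a by rewrite -(lerM2r a) mulVg -hh' mulKg.
apply: (@lt_le_trans _ _ (mul (inv s) (inv h))).
  by rewrite -[X in X < _]mulg1 ltrM2Vs.
by rewrite lexI lerM2Vs ih_le_ia andbT -(lerM2r h) mulgKV.
Qed.

Lemma right_normal_pair_left_normal a b :
  in_box inv e s a -> in_box inv e s b -> deg a = deg b ->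
  right_normal_pair a b -> left_normal_pair b a.
Proof.
move=> box_a box_b deg_ab rn [h [h' [he h'e h_neq_e hh' [sbh _]]]].
have join_e := right_normal_pair_join box_a box_b rn.
have := deg_lt (lt_meet_of_left_witness he h'e h_neq_e hh' sbh).
have := deg_meet_join (mul (inv s) (inv a)) b.
by rewrite join_e deg1 !degM !degV; lia.
Qed.

Lemma right_normal_rev_left_normal g gs c : right_normal mul inv e s g gs ->
  (forall x, x \in gs -> deg x = c) -> left_normal mul inv e s g (rev gs).
Proof.
case=> box prod rn hom; split=> [x|//|i]; first by rewrite mem_rev; exact: box.
rewrite size_rev => lt_i.
have lt_j : ((size gs - i.+2).+1 < size gs)%N by lia.
rewrite !nth_rev ?(ltnW lt_i) //.
have -> : (size gs - i.+1 = (size gs - i.+2).+1)%N by lia.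
apply: right_normal_pair_left_normal (rn _ lt_j).
- exact: (box _ (mem_nth e (ltnW lt_j))).1.
- exact: (box _ (mem_nth e lt_j)).1.
- by rewrite !hom ?mem_nth ?(ltnW lt_j).
Qed.

End RightLGroup.

Theorem mainTheorem7 (disp : Order.disp_t) (T : latticeType disp)
  (mul : T -> T -> T) (inv : T -> T) (e : T)
  (HG : is_right_lgroup mul inv e)
  (Hmod : @modular_lattice disp T)
  (Hnoeth : @noetherian disp T)
  (s : T) (Hs : strong_order_unit mul inv e s)
  (deg : T -> int) (Hdeg : is_degree mul e deg)
  (d : nat) (Hd : (1 <= d)%N)
  (g : T) (Hg : g <= e)
  (gs : seq T) (Hrn : right_normal mul inv e s g gs)
  (Hhom : forall x, x \in gs -> deg x = Posz d) :
  left_normal mul inv e s g (rev gs).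
Proof.
have [mulA [mul1g [mulg1 [mulVg [mulgV leM2r]]]]] := HG.
have [_ _ s_meet _ _] := Hs.
have [degM deg_prodl] := Hdeg.
have deg_atom a : covby a e -> deg a = 1%R.
  move=> ae; apply: (deg_prodl a [:: a]) => [|x|]; first exact: ltW ae.1.
    by rewrite inE => /eqP ->.
  by rewrite /prodl /= mulg1.
exact: (right_normal_rev_left_normal mulA mul1g mulg1 mulVg mulgV leM2r
  degM deg_atom Hnoeth Hmod s_meet Hrn Hhom).
Qed.
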